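(* Let $\mathcal{H}$ and $\mathcal{K}$ be finite-dimensional complex Hilbert spaces and let $\Psi: B(\mathcal{H})\to B(\mathcal{K})$ be a Hermitian-preserving trace-preserving linear map. Then the following are equivalent: (1) $\Psi$ is semi-positive, i.e. there exists an invertible density matrix $\rho\in B(\mathcal{H})$ such that $\Psi(\rho)$ is an invertible density matrix; (2) there exists a positive semidefinite $\rho\in B(\mathcal{H})$ such that $\Psi(\rho)$ is positive definite.
   Context: $B(\mathcal{H})$ denotes all linear operators on $\mathcal{H}$; a density matrix is a positive semidefinite operator of trace one. A map is Hermitian-preserving if $\Psi(X^\dagger)=\Psi(X)^\dagger$ and trace-preserving if $\operatorname{Tr}\Psi(X)=\operatorname{Tr}X$. *)

From HB Require Import structures.
From mathcomp Require Import all_boot all_order all_algebra.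
From mathcomp Require Import sesquilinear spectral.
Set Implicit Arguments. Unset Strict Implicit. Unset Printing Implicit Defensive.
Import Order.TTheory GRing.Theory Num.Theory.
Local Open Scope ring_scope.
Local Open Scope sesquilinear_scope.

(* Matrices over C : numClosedFieldType (e.g. the complex numbers);
   B(C^n) is 'M[C]_n, with adjoint A^t* = conjugate transpose. *)

Definition adjmx (C : numClosedFieldType) (n m : nat) (A : 'M[C]_(n, m)) : 'M[C]_(m, n) :=
  A ^t*.

Definition psdmx (C : numClosedFieldType) (n : nat) (A : 'M[C]_n) : Prop :=
  adjmx A = A /\ forall u : 'rV[C]_n, 0 <= (u *m A *m adjmx u) 0 0.

Definition pdmx (C : numClosedFieldType) (n : nat) (A : 'M[C]_n) : Prop :=
  adjmx A = A /\ forall u : 'rV[C]_n, u != 0 -> 0 < (u *m A *m adjmx u) 0 0.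

Definition densitymx (C : numClosedFieldType) (n : nat) (A : 'M[C]_n) : Prop :=
  psdmx A /\ \tr A = 1.

Definition hermitian_preserving (C : numClosedFieldType) (n m : nat)
  (Psi : 'M[C]_n -> 'M[C]_m) : Prop :=
  forall X, Psi (adjmx X) = adjmx (Psi X).

Definition trace_preserving (C : numClosedFieldType) (n m : nat)
  (Psi : 'M[C]_n -> 'M[C]_m) : Prop :=
  forall X, \tr (Psi X) = \tr X.

Definition semi_positive (C : numClosedFieldType) (n m : nat)
  (Psi : 'M[C]_n -> 'M[C]_m) : Prop :=
  exists rho : 'M[C]_n, [/\ densitymx rho, rho \in unitmx,
                            densitymx (Psi rho) & Psi rho \in unitmx].

(* (1) => (2) because an invertible positive semidefinite matrix is positive
   definite: its spectrum is nonnegative and avoids 0.  For (2) => (1), positive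
   definiteness is an open condition: if rho >= 0 and Psi rho > 0, then for small
   e > 0 both rho + e 1 and Psi (rho + e 1) = Psi rho + e Psi 1 are positive
   definite, since the Hermitian matrix Psi 1 is bounded below by some -b.  As Psi
   preserves traces, dividing rho + e 1 by its trace yields invertible density
   matrices on both sides.  The spectral estimates all come from one Rayleigh
   bound: if c is below the spectrum of a Hermitian A then c |u|^2 <= u A u^*. *)

From HB Require Import structures.
From mathcomp Require Import all_boot all_order all_algebra.
From mathcomp Require Import sesquilinear spectral.
Set Implicit Arguments. Unset Strict Implicit. Unset Printing Implicit Defensive.
Import Order.TTheory GRing.Theory Num.Theory.
Local Open Scope ring_scope.
Local Open Scope sesquilinear_scope.

Local Notation "''[' u ]" := (dotmx u u) : ring_scope.
Local Notation qform A u := ((u *m A *m u^t*) 0 0).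

(* The witness [(1 + \sum_i (f i)^-1)^-1] avoids a minimum, whose theory needs
   a total order. *)
Lemma exists_pos_lbound (R : numFieldType) (I : finType) (f : I -> R) :
  (forall i, 0 < f i) -> exists2 c, 0 < c & forall i, c <= f i.
Proof.
move=> f_gt0; have inv_ge0 j : 0 <= (f j)^-1 by rewrite invr_ge0 ltW.
have sum_ge0 : 0 <= \sum_j (f j)^-1 by apply: sumr_ge0.
exists (1 + \sum_j (f j)^-1)^-1 => [|i]; first by rewrite invr_gt0 ltr_pwDl.
rewrite -[f i]invrK lef_pV2 ?posrE ?invr_gt0 ?ltr_pwDl // ler_wpDl //.
by rewrite (bigD1 i) //= lerDl sumr_ge0.
Qed.

Section PositiveMatrices.
Variables (C : numClosedFieldType) (n : nat).
Implicit Types (A B : 'M[C]_n) (u : 'rV[C]_n).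

Lemma adjmxM p q r (X : 'M[C]_(p, q)) (Y : 'M[C]_(q, r)) :
  (X *m Y)^t* = Y^t* *m X^t*.
Proof. by rewrite trmx_mul map_mxM. Qed.

Lemma adjmxD p q (X Y : 'M[C]_(p, q)) : (X + Y)^t* = X^t* + Y^t*.
Proof. by rewrite linearD /= map_mxD. Qed.

Lemma adjmxZ p q c (X : 'M[C]_(p, q)) : (c *: X)^t* = c^* *: X^t*.
Proof. by rewrite linearZ /= map_mxZ. Qed.

Lemma adjmx1 : (1%:M : 'M[C]_n)^t* = 1%:M.
Proof. by rewrite trmx1 map_mx1. Qed.

Lemma dotmx_unitary (P : 'M[C]_n) u : P \is unitarymx -> '[u *m P] = '[u].
Proof. by move=> P_unitary; rewrite !dotmxE adjmxM mulmxA mulmxtVK. Qed.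

Lemma dotmx_sum u : '[u] = \sum_i `|u 0 i| ^+ 2.
Proof. by rewrite dotmxE mxE; apply: eq_bigr => i _; rewrite !mxE normCK. Qed.

Lemma qformD A B u : qform (A + B) u = qform A u + qform B u.
Proof. by rewrite mulmxDr mulmxDl [LHS]mxE. Qed.

Lemma qformZ c A u : qform (c *: A) u = c * qform A u.
Proof. by rewrite -scalemxAr -scalemxAl [LHS]mxE. Qed.

Lemma qform_real A u : A^t* = A -> qform A u \is Num.real.
Proof.
move=> A_herm; apply/CrealP.
have -> : (qform A u)^* = ((u *m A *m u^t*)^t*) 0 0 by rewrite !mxE.
by rewrite !adjmxM trmxCK A_herm mulmxA.
Qed.

Lemma dotmx_spectral_row A i : '[row i (spectralmx A)] = 1.
Proof. by have /row_unitarymxP -> := spectral_unitarymx A; rewrite eqxx. Qed.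

Lemma spectral_row_neq0 A i : row i (spectralmx A) != 0.
Proof.
apply/eqP => row0; have := dotmx_spectral_row A i.
by rewrite row0 dotmxE mul0mx mxE => /esym/eqP; rewrite oner_eq0.
Qed.

Section Spectral.
Variables (A : 'M[C]_n) (A_herm : A^t* = A).
Let P := spectralmx A.
Let d := spectral_diag A.

Lemma hermitian_spectralE : A = P^t* *m diag_mx d *m P.
Proof.
have /orthomx_spectralP {1}-> : A \is normalmx by apply/normalmxP; rewrite A_herm.
by rewrite invmx_unitary ?spectral_unitarymx.
Qed.

Lemma hermitian_qformE u : qform A u = \sum_i d 0 i * `|(u *m P^t*) 0 i| ^+ 2.
Proof.
rewrite {1}hermitian_spectralE !mulmxA -(mulmxA _ P).
have -> : P *m u^t* = (u *m P^t*)^t* by rewrite adjmxM trmxCK.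
rewrite mul_mx_diag !mxE; apply: eq_bigr => i _.
by rewrite !mxE normCK mulrCA mulrA.
Qed.

Lemma hermitian_qform_ge c u : (forall i, c <= d 0 i) -> c * '[u] <= qform A u.
Proof.
move=> c_le; rewrite hermitian_qformE -(dotmx_unitary u (_ : P^t* \is unitarymx)).
  rewrite dotmx_sum mulr_sumr; apply: ler_sum => i _.
  by rewrite ler_wpM2r ?exprn_ge0.
by rewrite (trmxC_unitary P) spectral_unitarymx.
Qed.

Lemma spectral_row_eigen i : row i P *m A = d 0 i *: row i P.
Proof.
rewrite {1}hermitian_spectralE !mulmxA -!row_mul.
rewrite (unitarymxP _) ?spectral_unitarymx //.
rewrite mul1mx row_mul [in RHS]rowE scalemxAl; congr (_ *m _).
apply/rowP => j; rewrite !mxE eqxx /=.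
by case: eqVneq => [->|]; rewrite ?mulr1 ?mulr0.
Qed.

Lemma spectral_diagE i : d 0 i = qform A (row i P).
Proof.
by rewrite spectral_row_eigen -scalemxAl mxE -dotmxE dotmx_spectral_row mulr1.
Qed.

End Spectral.

Lemma psdmx_spectral_ge0 A : psdmx A -> forall i, 0 <= spectral_diag A 0 i.
Proof. by case=> A_herm A_ge0 i; rewrite spectral_diagE. Qed.

Lemma pdmx_spectral_gt0 A : pdmx A -> forall i, 0 < spectral_diag A 0 i.
Proof.
by case=> A_herm A_gt0 i; rewrite spectral_diagE // A_gt0 ?spectral_row_neq0.
Qed.

Lemma pdmx_spectral A :
  A^t* = A -> (forall i, 0 < spectral_diag A 0 i) -> pdmx A.
Proof.
move=> A_herm d_gt0; split=> // u u_neq0.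
have [c c_gt0 c_le] := exists_pos_lbound d_gt0.
apply: lt_le_trans (hermitian_qform_ge A_herm u c_le).
by rewrite mulr_gt0 // dotmx_is_dotmx.
Qed.

Lemma psdmx_unit_pdmx A : psdmx A -> A \in unitmx -> pdmx A.
Proof.
move=> A_psd A_unit; have [A_herm _] := A_psd.
apply: pdmx_spectral => // i; rewrite lt_def psdmx_spectral_ge0 // andbT.
apply: contraNneq (spectral_row_neq0 A i) => d0.
rewrite -(mulmx_free_eq0 _ (_ : row_free A)) ?row_free_unit //.
by rewrite spectral_row_eigen // d0 scale0r.
Qed.

Lemma pdmx_unit A : pdmx A -> A \in unitmx.
Proof.
case=> _ A_gt0; rewrite -row_free_unit; apply: inj_row_free => u uA0.
by apply/eqP/negPn/negP => /A_gt0; rewrite uA0 mul0mx mxE ltxx.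
Qed.

Lemma pdmx_psdmx A : pdmx A -> psdmx A.
Proof.
case=> A_herm A_gt0; split=> // u.
by have [->|/A_gt0/ltW//] := eqVneq u 0; rewrite !mul0mx mxE.
Qed.

Lemma pdmxZ c A : 0 < c -> pdmx A -> pdmx (c *: A).
Proof.
move=> c_gt0 [A_herm A_gt0]; split.
  by rewrite /adjmx in A_herm *; rewrite adjmxZ A_herm conj_Creal ?gtr0_real.
by move=> u /A_gt0 uAu_gt0; rewrite /adjmx qformZ mulr_gt0.
Qed.

Lemma psdmx_pdmxD A B : psdmx A -> pdmx B -> pdmx (A + B).
Proof.
move=> [A_herm A_ge0] [B_herm B_gt0]; split.
  by rewrite /adjmx in A_herm B_herm *; rewrite adjmxD A_herm B_herm.
by move=> u /B_gt0 uBu_gt0; rewrite /adjmx qformD ltr_wpDl ?A_ge0.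
Qed.

Lemma pdmx1 : pdmx (1%:M : 'M[C]_n).
Proof.
by split=> [|u]; rewrite /adjmx ?adjmx1 // mulmx1 -dotmxE; apply: dotmx_is_dotmx.
Qed.

Lemma pdmx_perturb A B :
  pdmx A -> B^t* = B -> exists2 e, 0 < e & pdmx (A + e *: B).
Proof.
move=> A_pd B_herm; have [A_herm _] := A_pd; rewrite /adjmx in A_herm.
have [c c_gt0 c_le] := exists_pos_lbound (pdmx_spectral_gt0 A_pd).
pose b := \sum_i `|spectral_diag B 0 i|.
have b_ge0 : 0 <= b by rewrite sumr_ge0.
have Nb_le i : - b <= spectral_diag B 0 i.
  apply: real_lerNnormlW; first by rewrite spectral_diagE ?qform_real.
  by rewrite /b (bigD1 i) //= lerDl sumr_ge0.
pose e := c / (b + 1).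
have e_gt0 : 0 < e by rewrite mulr_gt0 ?invr_gt0 ?ltr_wpDl.
have eb_lt : e * b < c.
  by rewrite mulrAC ltr_pdivrMr ?ltr_wpDl // ltr_pM2l // ltrDl.
exists e => //; split.
  by rewrite /adjmx adjmxD adjmxZ A_herm B_herm conj_Creal ?gtr0_real.
move=> u u_neq0; rewrite /adjmx qformD qformZ.
apply: lt_le_trans (_ : (c - e * b) * '[u] <= _).
  by rewrite mulr_gt0 ?subr_gt0 ?dotmx_is_dotmx.
rewrite mulrBl lerD ?hermitian_qform_ge // -mulrA -mulrN -mulNr.
by apply: ler_wpM2l; [exact: ltW | exact: hermitian_qform_ge].
Qed.

Lemma pdmx_diag_gt0 A : pdmx A -> forall i, 0 < A i i.
Proof.
case=> _ A_gt0 i; have e_neq0 : 'e_i != 0 :> 'rV[C]_n.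
  by apply/eqP => /rowP/(_ i)/eqP; rewrite !mxE !eqxx oner_eq0.
have := A_gt0 _ e_neq0; rewrite -rowE.
have -> : adjmx ('e_i : 'rV[C]_n) = delta_mx i 0.
  by apply/matrixP => j k; rewrite !mxE conjC_nat andbC.
by rewrite -colE !mxE.
Qed.

End PositiveMatrices.

Lemma pdmx_tr_gt0 (C : numClosedFieldType) n (A : 'M[C]_n.+1) :
  pdmx A -> 0 < \tr A.
Proof.
move=> A_pd; rewrite /mxtrace (bigD1 ord0) //= ltr_wpDr ?pdmx_diag_gt0 //.
by apply: sumr_ge0 => i _; exact: ltW (pdmx_diag_gt0 A_pd i).
Qed.

Lemma pdmx_density (C : numClosedFieldType) n (A : 'M[C]_n.+1) :
  pdmx A -> densitymx ((\tr A)^-1 *: A) /\ (\tr A)^-1 *: A \in unitmx.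
Proof.
move=> A_pd; have tr_gt0 := pdmx_tr_gt0 A_pd.
have nA_pd : pdmx ((\tr A)^-1 *: A) by apply: pdmxZ; rewrite ?invr_gt0.
split; last exact: pdmx_unit.
by split; [exact: pdmx_psdmx | rewrite mxtraceZ mulVf ?gt_eqF].
Qed.

Theorem mainTheorem10 (C : numClosedFieldType) (n m : nat)
  (Psi : {linear 'M[C]_n.+1 -> 'M[C]_m.+1}) :
  hermitian_preserving Psi -> trace_preserving Psi ->
  (semi_positive Psi <->
   exists rho : 'M[C]_n.+1, psdmx rho /\ pdmx (Psi rho)).
Proof.
move=> Psi_herm Psi_tr; split.
  case=> rho [[rho_psd _] _ [Psirho_psd _] Psirho_unit].
  by exists rho; split; last exact: psdmx_unit_pdmx.
case=> rho [rho_psd Psirho_pd].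
have Psi1_herm : adjmx (Psi 1%:M) = Psi 1%:M by rewrite -Psi_herm /adjmx adjmx1.
have [e e_gt0 Psi_perturb_pd] := pdmx_perturb Psirho_pd Psi1_herm.
pose R := rho + e *: 1%:M.
have R_pd : pdmx R := psdmx_pdmxD rho_psd (pdmxZ e_gt0 (pdmx1 _ _)).
have PsiR_pd : pdmx (Psi R) by rewrite linearD linearZ.
have [R_density R_unit] := pdmx_density R_pd.
have [PsiR_density PsiR_unit] := pdmx_density PsiR_pd.
rewrite Psi_tr -linearZ in PsiR_density PsiR_unit.
by exists ((\tr R)^-1 *: R).
Qed.
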